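(* Let $N\ge1$ and $\varphi,\psi\in\mathbb{C}^N$ be such that for $k=0,\ldots,2N-2$, $$\Big|P_\varphi\Big(\tfrac{k}{2N-1}\Big)\Big|=\Big|P_\psi\Big(\tfrac{k}{2N-1}\Big)\Big|$$ and $$\Big|P_\varphi\Big(\tfrac{k+1}{2N-1}\Big)-P_\varphi\Big(\tfrac{k}{2N-1}\Big)\Big|=\Big|P_\psi\Big(\tfrac{k+1}{2N-1}\Big)-P_\psi\Big(\tfrac{k}{2N-1}\Big)\Big|.$$ Then there exists $\lambda\in\mathbb{C}$ with $|\lambda|=1$ such that $\psi=\lambda\varphi$.
   Context: For $\psi=(\psi_0,\ldots,\psi_{N-1})\in\mathbb{C}^N$, $P_\psi(x)=\sum_{j=0}^{N-1}\psi_je^{2i\pi jx}$ for $x\in\mathbb{R}$ (a $1$-periodic function). *)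

From Stdlib Require Import Reals.
From Coquelicot Require Import Coquelicot.
Open Scope R_scope.

Definition cexp2pi (t : R) : C := (cos (2 * PI * t), sin (2 * PI * t)).

Fixpoint csum (n : nat) (f : nat -> C) : C :=
  match n with
  | O => 0%C
  | S m => Cplus (csum m f) (f m)
  end.

(* P_psi(x) = \sum_{j=0}^{N-1} psi_j e^{2 i pi j x}; a vector of C^N is
   represented by psi : nat -> C, of which only the entries j < N matter. *)
Definition Ptrig (N : nat) (psi : nat -> C) (x : R) : C :=
  csum N (fun j => Cmult (psi j) (cexp2pi (INR j * x))).

(* Let [w = exp(2 i pi / (2N - 1))], let [P] be the polynomial with coefficient vector
   [phi], so that [P_phi(k / (2N - 1)) = P(w^k)], and let [P^#] be its conjugate reciprocal
   of degree [N - 1] ([conj_rev]), so that [P^#(z) = z^(N-1) conj(P(z))] on the unit circle.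
   Then [P P^#] has degree at most [2N - 2] and equals [z^(N-1) |P|^2] on the circle, so it is
   determined by the [2N - 1] samples [|P(w^k)|]; the same holds for [Pw := P(w .)], sampled at
   the shifted points, and, by polarization, the samples [|P(w^(k+1)) - P(w^k)|] determine
   [X + X'] where [X = Pw P^#] and [X' = P Pw^#]. Since [X X' = (Pw Pw^#) (P P^#)] is known
   too, the unordered pair {X, X'} is determined. For [Q] built from [psi], either
   [Qw Q^# = X], which with [P P^# = Q Q^#] gives [Qw P = Pw Q] and hence [Q = lambda P] by
   a leading-coefficient argument; or [Qw Q^# = X'], in which case the degrees force [P] and
   [Q] to be constant. Finally [|lambda| = 1] because [P P^# = Q Q^#]. *)

From Stdlib Require Import Reals Lra Lia.
From Coquelicot Require Import Coquelicot.
Open Scope R_scope.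

Lemma cexp2pi_add s t : cexp2pi (s + t) = Cmult (cexp2pi s) (cexp2pi t).
Proof.
unfold cexp2pi, Cmult; simpl.
replace (2 * PI * (s + t)) with (2 * PI * s + 2 * PI * t) by ring.
rewrite cos_plus, sin_plus; f_equal; ring.
Qed.

Lemma cexp2pi_1 : cexp2pi 1 = (1, 0).
Proof. unfold cexp2pi; rewrite Rmult_1_r, cos_2PI, sin_2PI; reflexivity. Qed.

Lemma sin_2PI_ratio_neq0 d M : (0 < d < M)%nat -> (2 * d <> M)%nat ->
  sin (2 * PI * (INR d / INR M)) <> 0.
Proof.
intros [Hd HdM] H2d Hsin.
apply sin_eq_0_0 in Hsin; destruct Hsin as [k Hk].
assert (HM : INR M > 0) by (apply lt_0_INR; lia).
assert (Hk2 : 2 * INR d = IZR k * INR M).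
{ apply (Rmult_eq_reg_l PI); [| apply PI_neq0].
  replace (PI * (2 * INR d)) with (2 * PI * (INR d / INR M) * INR M) by (field; lra).
  rewrite Hk; ring. }
rewrite !INR_IZR_INZ, <- !mult_IZR in Hk2; apply eq_IZR in Hk2.
assert (k = 1)%Z by nia.
subst k; lia.
Qed.

From HB Require Import structures.
From mathcomp Require Import all_boot all_algebra.
From mathcomp Require Import Rstruct complex ring zify.
Import GRing.Theory Num.Theory.
Local Open Scope ring_scope.

Lemma coef_comp_scaleX (R : comNzRingType) (p : {poly R}) c j :
  (p \Po (c *: 'X))`_j = p`_j * c ^+ j.
Proof.
rewrite comp_polyE coef_sum.
under eq_bigr do rewrite exprZn coefZ coefZ coefXn.
have [ltjp | lejp] := ltnP j (size p).
  rewrite (bigD1 (Ordinal ltjp)) //= eqxx mulr1 big1 ?addr0 // => i neq_ij.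
  by move: neq_ij; rewrite -val_eqE /= eq_sym => /negbTE ->; rewrite !mulr0.
rewrite nth_default // mul0r big1 // => i _.
by rewrite gtn_eqF ?mulr0 // (leq_trans (ltn_ord i)).
Qed.

Lemma size_comp_scaleX (R : idomainType) (p : {poly R}) c :
  c != 0 -> size (p \Po (c *: 'X)) = size p.
Proof. by move=> c0; rewrite size_comp_poly2 // size_scale ?size_polyX. Qed.

Lemma lead_coef_comp_scaleX (R : idomainType) (p : {poly R}) c : c != 0 ->
  lead_coef (p \Po (c *: 'X)) = lead_coef p * c ^+ (size p).-1.
Proof.
move=> c0; rewrite lead_coef_comp ?size_scale ?size_polyX //.
by rewrite lead_coefZ lead_coefX mulr1.
Qed.

Lemma sum_mul_eq_cases {R : idomainType} {x x' y y' : R} :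
  x + x' = y + y' -> x * x' = y * y' -> y = x \/ y = x'.
Proof.
move=> sumE mulE.
have : (y - x) * (y - x') = x * x' - y * y' - y * (x + x' - (y + y')) by ring.
rewrite mulE sumE !subrr mulr0 subr0 => /eqP; rewrite mulf_eq0 !subr_eq0.
by case/orP=> /eqP; [left | right].
Qed.

Section PrimitiveRoot.

Context {R : idomainType} {n : nat} {w : R} (prim_w : n.-primitive_root w).

Lemma prim_root_expr_inj i j : (i < n)%N -> (j < n)%N -> w ^+ i = w ^+ j -> i = j.
Proof.
by move=> ltin ltjn /eqP; rewrite (eq_prim_root_expr prim_w) !modn_small // => /eqP.
Qed.

Lemma prim_root_expr_all (P : R -> Prop) :
  (forall k, (k < n)%N -> P (w ^+ k)) -> forall k, P (w ^+ k).
Proof.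
move=> Pw k; rewrite -(prim_expr_mod prim_w); apply: Pw.
by rewrite ltn_pmod ?(prim_order_gt0 prim_w).
Qed.

Lemma poly_eq_on_prim_root_powers (p q : {poly R}) :
  (size p <= n)%N -> (size q <= n)%N ->
  (forall k, (k < n)%N -> p.[w ^+ k] = q.[w ^+ k]) -> p = q.
Proof.
move=> szp szq pqE; apply/eqP; rewrite -subr_eq0; apply/eqP.
apply: (@roots_geq_poly_eq0 _ _ (mkseq (fun k => w ^+ k) n)).
- apply/allP=> x /mapP [k]; rewrite mem_iota => /andP [_ ltkn] ->.
  by rewrite /root hornerD hornerN pqE ?subrr.
- rewrite map_inj_in_uniq ?iota_uniq // => i j; rewrite !mem_iota.
  by move=> /andP [_ ltin] /andP [_ ltjn]; apply: prim_root_expr_inj.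
- by rewrite size_mkseq (leq_trans (size_polyD _ _)) // size_polyN geq_max szp szq.
Qed.

End PrimitiveRoot.

Lemma prim_root_mul_conj {C : numClosedFieldType} {n} {w : C} :
  n.-primitive_root w -> w * w^* = 1.
Proof.
move=> prim_w; have := congr1 Num.norm (prim_expr_order prim_w).
rewrite normrX normr1 => /eqP; rewrite pexpr_eq1 ?(prim_order_gt0 prim_w) // => /eqP w1.
by rewrite -normCK w1 expr1n.
Qed.

Section Autocorrelation.

Context {C : numClosedFieldType} (N : nat).
Implicit Types (p q : {poly C}) (w z : C).

Definition conj_rev p : {poly C} := \poly_(j < N) (p`_(N.-1 - j))^*.
Definition autocorr p := p * conj_rev p.
Definition mixed_autocorr w p :=
  (p \Po (w *: 'X)) * conj_rev p + p * conj_rev (p \Po (w *: 'X)).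

Lemma conj_rev_eq0 p : (size p <= N)%N -> (conj_rev p == 0) = (p == 0).
Proof.
move=> szp; apply/eqP/eqP => [rp0 | ->]; last first.
  by apply/polyP=> j; rewrite coef_poly !coef0 conjC0 if_same.
apply/polyP=> j; rewrite coef0.
have [ltjN | leNj] := ltnP j N; last by rewrite nth_default // (leq_trans szp).
have := congr1 (coefp (N.-1 - j)) rp0; rewrite /= coef_poly coef0 ifT; last by lia.
have -> : (N.-1 - (N.-1 - j) = j)%N by lia.
by move/eqP; rewrite conjC_eq0 => /eqP.
Qed.

Lemma conj_revZ c p : conj_rev (c *: p) = c^* *: conj_rev p.
Proof.
apply/polyP=> j; rewrite coefZ !coef_poly coefZ rmorphM.
by case: ifP; rewrite ?mulr0.
Qed.

Lemma conj_rev_comp_scaleX w p : w * w^* = 1 ->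
  conj_rev (p \Po (w *: 'X)) = w^* ^+ N.-1 *: (conj_rev p \Po (w *: 'X)).
Proof.
move=> ww; apply/polyP=> j; rewrite coefZ coef_comp_scaleX !coef_poly coef_comp_scaleX.
case: ifP => ltjN; last by rewrite mul0r mulr0.
have wjE : w^* ^+ N.-1 * w ^+ j = w^* ^+ (N.-1 - j).
  rewrite -{1}(subnK (_ : j <= N.-1)%N); last by lia.
  by rewrite exprD -mulrA -exprMn (mulrC w^*) ww expr1n mulr1.
by rewrite rmorphM rmorphXn /= mulrCA wjE mulrC.
Qed.

Lemma horner_conj_rev p z : (size p <= N)%N -> z * z^* = 1 ->
  (conj_rev p).[z] = z ^+ N.-1 * (p.[z])^*.
Proof.
move=> szp zz; rewrite horner_poly (horner_coef_wide z szp) rmorph_sum mulr_sumr.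
rewrite (reindex_inj rev_ord_inj) /=; apply: eq_bigr => i _.
have -> : (N.-1 - (N - i.+1) = i)%N by have := ltn_ord i; lia.
rewrite rmorphM rmorphXn /= mulrCA; congr (_ * _).
have -> : N.-1 = (N - i.+1 + i)%N by have := ltn_ord i; lia.
by rewrite exprD -mulrA -exprMn zz expr1n mulr1.
Qed.

Lemma size_mul_le_double p q : (size p <= N)%N -> (size q <= N)%N ->
  (size (p * q)%R <= 2 * N - 1)%N.
Proof. by move=> szp szq; apply: (leq_trans (size_polyMleq _ _)); lia. Qed.

Lemma size_autocorr p : (size p <= N)%N -> (size (autocorr p) <= 2 * N - 1)%N.
Proof. by move=> szp; apply: size_mul_le_double => //; apply: size_poly. Qed.

Lemma size_mixed_autocorr w p : w != 0 -> (size p <= N)%N ->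
  (size (mixed_autocorr w p) <= 2 * N - 1)%N.
Proof.
move=> w0 szp; apply: (leq_trans (size_polyD _ _)); rewrite geq_max.
by rewrite !size_mul_le_double ?size_comp_scaleX ?size_poly.
Qed.

Lemma autocorr_eq0 p : (size p <= N)%N -> (autocorr p == 0) = (p == 0).
Proof. by move=> szp; rewrite mulf_eq0 conj_rev_eq0 // orbb. Qed.

Lemma autocorrZ c p : autocorr (c *: p) = `|c| ^+ 2 *: autocorr p.
Proof. by rewrite /autocorr conj_revZ -scalerAl -scalerAr scalerA normCK. Qed.

Lemma horner_autocorr p z : (size p <= N)%N -> z * z^* = 1 ->
  (autocorr p).[z] = z ^+ N.-1 * `|p.[z]| ^+ 2.
Proof. by move=> szp zz; rewrite hornerM horner_conj_rev // normCK mulrCA. Qed.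

(* Polarization: [2 Re (a conj b) = |a|^2 + |b|^2 - |a - b|^2]. *)
Lemma horner_mixed_autocorr w p z : w != 0 -> (size p <= N)%N -> z * z^* = 1 ->
  (mixed_autocorr w p).[z] =
  z ^+ N.-1 * (`|p.[w * z]| ^+ 2 + `|p.[z]| ^+ 2 - `|p.[w * z] - p.[z]| ^+ 2).
Proof.
move=> w0 szp zz.
rewrite hornerD !hornerM !horner_conj_rev ?size_comp_scaleX //.
by rewrite !horner_comp hornerZ hornerX !normCK rmorphB /=; ring.
Qed.

Section PrimitiveSampling.

Context {w : C} (prim_w : (2 * N - 1).-primitive_root w).

Let N_gt0 : (0 < N)%N.
Proof. by have := prim_order_gt0 prim_w; lia. Qed.

Let w_neq0 : w != 0.
Proof. by rewrite (prim_root_eq0 prim_w) -lt0n (prim_order_gt0 prim_w). Qed.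

Let w_mul_conj : w * w^* = 1 := prim_root_mul_conj prim_w.

Let exprw_mul_conj k : w ^+ k * (w ^+ k)^* = 1.
Proof. by rewrite rmorphXn -exprMn w_mul_conj expr1n. Qed.

(* With [lam] chosen to cancel the coefficient of degree [deg p] in [q - lam p], the leading
   coefficients of the two sides would force [deg (q - lam p) = deg p] were it nonzero. *)
Lemma scale_of_comp_cross p q : (size p <= N)%N -> (size q <= N)%N -> p != 0 ->
  (q \Po (w *: 'X)) * p = (p \Po (w *: 'X)) * q -> exists lam, q = lam *: p.
Proof.
move=> szp szq p0 crossE.
set d := (size p).-1.
have pd0 : p`_d != 0 by rewrite -lead_coefE lead_coef_eq0.
pose lam := q`_d / p`_d; exists lam; set r := q - lam *: p.
have rE : (r \Po (w *: 'X)) * p = (p \Po (w *: 'X)) * r.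
  by rewrite comp_polyB comp_polyZ mulrBl mulrBr crossE -scalerAl -scalerAr.
suff r0 : r = 0 by apply/eqP; rewrite -subr_eq0 -/r r0.
apply/eqP; apply: contraT => r0.
have szr : (size r <= N)%N.
  rewrite (leq_trans (size_polyD _ _)) // geq_max szq size_polyN.
  exact: leq_trans (size_scale_leq _ _) szp.
have lr0 : lead_coef r != 0 by rewrite lead_coef_eq0.
have lp0 : lead_coef p != 0 by rewrite lead_coef_eq0.
have := congr1 lead_coef rE; rewrite !lead_coefM !lead_coef_comp_scaleX // => leadE.
have wE : w ^+ (size r).-1 = w ^+ d.
  apply: (mulfI (mulf_neq0 lr0 lp0)).
  by rewrite mulrAC leadE mulrAC (mulrC (lead_coef p)).
have dE : (size r).-1 = d by apply: (prim_root_expr_inj prim_w) wE; lia.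
by move: lr0; rewrite lead_coefE dE coefB coefZ divfK // subrr eqxx.
Qed.

(* Leading coefficients give [deg q + N - 1 = deg (conj_rev p) <= N - 1], and then the
   degrees of the autocorrelations give [deg p = 0]. *)
Lemma scale_of_comp_swap p q : (size p <= N)%N -> (size q <= N)%N -> p != 0 ->
  autocorr p = autocorr q ->
  (q \Po (w *: 'X)) * conj_rev q = p * conj_rev (p \Po (w *: 'X)) ->
  exists lam, q = lam *: p.
Proof.
move=> szp szq p0 autoE swapE.
have q0 : q != 0 by rewrite -(autocorr_eq0 _ szq) -autoE autocorr_eq0.
have rp0 : conj_rev p != 0 by rewrite conj_rev_eq0.
have rq0 : conj_rev q != 0 by rewrite conj_rev_eq0.
have szrp : (size (conj_rev p) <= N)%N by apply: size_poly.
have szrq : (size (conj_rev q) <= N)%N by apply: size_poly.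
have L0 : lead_coef p * lead_coef (conj_rev p) != 0 by rewrite mulf_neq0 ?lead_coef_eq0.
have leadS := congr1 lead_coef autoE; rewrite !lead_coefM in leadS.
have := congr1 lead_coef swapE.
rewrite conj_rev_comp_scaleX // -scalerAr lead_coefZ !lead_coefM.
rewrite !lead_coef_comp_scaleX // => leadE.
have wE : w ^+ ((size q).-1 + N.-1) = w ^+ (size (conj_rev p)).-1.
  apply: (mulfI L0); rewrite exprD.
  transitivity (lead_coef q * w ^+ (size q).-1 * lead_coef (conj_rev q) * w ^+ N.-1).
    by rewrite leadS; ring.
  by rewrite leadE mulrC !mulrA -rmorphXn exprw_mul_conj mul1r.
have dE : ((size q).-1 + N.-1 = (size (conj_rev p)).-1)%N.
  by apply: (prim_root_expr_inj prim_w) wE; lia.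
have [sq1 sp1] : size q = 1%N /\ size p = 1%N.
  have sizeE : (size p + size (conj_rev p)).-1 = (size q + size (conj_rev q)).-1.
    by rewrite -!size_mul // -/(autocorr p) -/(autocorr q) autoE.
  by move: p0 q0 rp0 rq0; rewrite -!size_poly_gt0; lia.
have : lead_coef p != 0 by rewrite lead_coef_eq0.
rewrite lead_coefE sp1 => p00.
exists (q`_0 / p`_0).
rewrite {1}(size1_polyC (eq_leq sq1)) {2}(size1_polyC (eq_leq sp1)).
by rewrite -mul_polyC -polyCM divfK.
Qed.

(* [mixed_autocorr w p] and [autocorr (p \Po (w *: 'X)) * autocorr p] are the sum and
   the product of [(p \Po (w *: 'X)) * conj_rev p] and [p * conj_rev (p \Po (w *: 'X))]. *)
Lemma scale_of_autocorr p q : (size p <= N)%N -> (size q <= N)%N ->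
  autocorr p = autocorr q ->
  autocorr (p \Po (w *: 'X)) = autocorr (q \Po (w *: 'X)) ->
  mixed_autocorr w p = mixed_autocorr w q ->
  exists lam, `|lam| = 1 /\ q = lam *: p.
Proof.
move=> szp szq autoE autowE mixedE.
have [p0 | pN0] := eqVneq p 0.
  exists 1; rewrite normr1 scale1r p0; split=> //; apply/eqP.
  by rewrite -(autocorr_eq0 _ szq) -autoE p0 /autocorr mul0r.
suff [lam qE] : exists lam, q = lam *: p.
  exists lam; split=> //; move: autoE; rewrite qE autocorrZ => /eqP.
  rewrite -subr_eq0 -{1}(scale1r (autocorr p)) -scalerBl scaler_eq0.
  rewrite autocorr_eq0 // (negbTE pN0) orbF subr_eq0 eq_sym.
  by rewrite pexpr_eq1 // => /eqP.
have qN0 : q != 0 by rewrite -(autocorr_eq0 _ szq) -autoE autocorr_eq0.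
have mulE v : (v \Po (w *: 'X)) * conj_rev v * (v * conj_rev (v \Po (w *: 'X)))
              = autocorr (v \Po (w *: 'X)) * autocorr v.
  by rewrite /autocorr; ring.
have := sum_mul_eq_cases mixedE; rewrite !mulE autoE autowE => /(_ erefl).
case=> [crossE | swapE]; last exact: scale_of_comp_swap swapE.
apply: scale_of_comp_cross => //; apply/eqP.
have : conj_rev p * conj_rev q * ((q \Po (w *: 'X)) * p - (p \Po (w *: 'X)) * q) = 0.
  transitivity ((q \Po (w *: 'X)) * conj_rev q * autocorr p
                - (p \Po (w *: 'X)) * conj_rev p * autocorr q).
    by rewrite /autocorr; ring.
  by rewrite crossE autoE subrr.
move/eqP; rewrite !mulf_eq0 !conj_rev_eq0 // (negbTE pN0) (negbTE qN0) /=.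
by rewrite subr_eq0.
Qed.

Lemma autocorr_eq_of_samples p q : (size p <= N)%N -> (size q <= N)%N ->
  (forall k, `|p.[w ^+ k]| = `|q.[w ^+ k]|) -> autocorr p = autocorr q.
Proof.
move=> szp szq pqE; apply: (poly_eq_on_prim_root_powers prim_w); rewrite ?size_autocorr //.
by move=> k _; rewrite !horner_autocorr ?exprw_mul_conj // pqE.
Qed.

Lemma mixed_autocorr_eq_of_samples p q : (size p <= N)%N -> (size q <= N)%N ->
  (forall k, `|p.[w ^+ k]| = `|q.[w ^+ k]|) ->
  (forall k, `|p.[w * w ^+ k] - p.[w ^+ k]| = `|q.[w * w ^+ k] - q.[w ^+ k]|) ->
  mixed_autocorr w p = mixed_autocorr w q.
Proof.
move=> szp szq pqE diffE.
apply: (poly_eq_on_prim_root_powers prim_w); rewrite ?size_mixed_autocorr //.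
by move=> k _; rewrite !horner_mixed_autocorr ?exprw_mul_conj // diffE -exprS !pqE.
Qed.

Theorem scale_of_prim_root_samples p q : (size p <= N)%N -> (size q <= N)%N ->
  (forall k, (k < 2 * N - 1)%N -> `|p.[w ^+ k]| = `|q.[w ^+ k]|) ->
  (forall k, (k < 2 * N - 1)%N ->
     `|p.[w ^+ k.+1] - p.[w ^+ k]| = `|q.[w ^+ k.+1] - q.[w ^+ k]|) ->
  exists lam, `|lam| = 1 /\ q = lam *: p.
Proof.
move=> szp szq pqE diffE.
have {}pqE := prim_root_expr_all prim_w (fun z => `|p.[z]| = `|q.[z]|) pqE.
have {}diffE : forall k, `|p.[w * w ^+ k] - p.[w ^+ k]| = `|q.[w * w ^+ k] - q.[w ^+ k]|.
  apply: (prim_root_expr_all prim_w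
            (fun z => `|p.[w * z] - p.[z]| = `|q.[w * z] - q.[z]|)).
  by move=> k ltk; rewrite -exprS diffE.
apply: scale_of_autocorr => //; first exact: autocorr_eq_of_samples.
  apply: autocorr_eq_of_samples; rewrite ?size_comp_scaleX // => k.
  by rewrite !horner_comp hornerZ hornerX -exprS.
exact: mixed_autocorr_eq_of_samples.
Qed.

End PrimitiveSampling.

End Autocorrelation.

Definition complex_of_C (z : C) : R[i] := Complex z.1 z.2.

Lemma complex_of_C_add x y : complex_of_C (Cplus x y) = complex_of_C x + complex_of_C y.
Proof. by case: x; case: y. Qed.

Lemma complex_of_C_mul x y : complex_of_C (Cmult x y) = complex_of_C x * complex_of_C y.
Proof. by case: x => a b; case: y => c d. Qed.

Lemma complex_of_C_sub x y : complex_of_C (Cminus x y) = complex_of_C x - complex_of_C y.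
Proof. by case: x; case: y. Qed.

Lemma complex_of_C_inj : injective complex_of_C.
Proof. by case=> a b [c d] [-> ->]. Qed.

Lemma complex_of_C_csum n f : complex_of_C (csum n f) = \sum_(j < n) complex_of_C (f j).
Proof.
elim: n => [|n IHn]; first by rewrite big_ord0.
by rewrite /= complex_of_C_add IHn big_ord_recr.
Qed.

Lemma norm_complex_of_C z : `|complex_of_C z| = Complex (Cmod z) 0.
Proof. by rewrite normc_def /Cmod RsqrtE !RpowE RplusE. Qed.

Lemma complex_of_cexp2pi_natmul n t :
  complex_of_C (cexp2pi (INR n * t)) = complex_of_C (cexp2pi t) ^+ n.
Proof.
elim: n => [|n IHn].
  by rewrite Rmult_0_l /cexp2pi Rmult_0_r cos_0 sin_0.
by rewrite S_INR Rmult_plus_distr_r Rmult_1_l cexp2pi_add complex_of_C_mul IHn exprSr.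
Qed.

Definition trig_poly N (v : nat -> C) : {poly R[i]} := \poly_(j < N) complex_of_C (v j).

Lemma horner_trig_poly N v x :
  (trig_poly N v).[complex_of_C (cexp2pi x)] = complex_of_C (Ptrig N v x).
Proof.
rewrite horner_poly complex_of_C_csum; apply: eq_bigr => j _.
by rewrite complex_of_C_mul complex_of_cexp2pi_natmul.
Qed.

Definition sample_root N := complex_of_C (cexp2pi (/ INR (2 * N - 1))).

Lemma sample_root_expr N k :
  sample_root N ^+ k = complex_of_C (cexp2pi (INR k / INR (2 * N - 1))).
Proof. by rewrite -complex_of_cexp2pi_natmul. Qed.

Lemma sample_root_prim N : (0 < N)%N -> (2 * N - 1).-primitive_root (sample_root N).
Proof.
move=> N_gt0; have M_gt0 : (0 < 2 * N - 1)%N by lia.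
have rootM : sample_root N ^+ (2 * N - 1) = 1.
  rewrite sample_root_expr /Rdiv Rinv_r ?cexp2pi_1 //.
  by apply: not_0_INR; lia.
have [m prim_m dvd_m] := prim_order_exists M_gt0 rootM.
suff mE : m = (2 * N - 1)%N by rewrite -mE.
have m_gt0 := prim_order_gt0 prim_m.
apply/eqP; rewrite eqn_leq dvdn_leq //= leqNgt; apply/negP => ltmM.
have := congr1 (@complex.Im _) (prim_expr_order prim_m).
rewrite sample_root_expr /=.
by apply: (sin_2PI_ratio_neq0 m (2 * N - 1)); lia.
Qed.

Lemma trig_poly_sample N v k : (trig_poly N v).[sample_root N ^+ k]
  = complex_of_C (Ptrig N v (Rdiv (INR k) (INR (2 * N - 1)))).
Proof. by rewrite sample_root_expr horner_trig_poly. Qed.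

Local Open Scope R_scope.

Theorem mainTheorem13 (N : nat) (phi psi : nat -> C) :
  (le 1 N) ->
  (forall k : nat, (le k (2 * N - 2)%nat) ->
     Cmod (Ptrig N phi (INR k / INR (2 * N - 1)))
     = Cmod (Ptrig N psi (INR k / INR (2 * N - 1)))) ->
  (forall k : nat, (le k (2 * N - 2)%nat) ->
     Cmod (Cminus (Ptrig N phi (INR (k + 1) / INR (2 * N - 1)))
                  (Ptrig N phi (INR k / INR (2 * N - 1))))
     = Cmod (Cminus (Ptrig N psi (INR (k + 1) / INR (2 * N - 1)))
                    (Ptrig N psi (INR k / INR (2 * N - 1))))) ->
  exists lambda : C, Cmod lambda = 1 /\
    forall j : nat, (lt j N) -> psi j = Cmult lambda (phi j).
Proof.
move=> /ltP N_gt0 modE diffE.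
have [k ltk | k ltk | lam [lam1 scaleE]] := scale_of_prim_root_samples N
  (sample_root_prim N N_gt0) (trig_poly N phi) (trig_poly N psi)
  (size_poly _ _) (size_poly _ _) _ _.
- by rewrite !trig_poly_sample !norm_complex_of_C modE //; lia.
- by rewrite !trig_poly_sample -!complex_of_C_sub !norm_complex_of_C -addn1 diffE //; lia.
exists (complex.Re lam, complex.Im lam); split.
  have := norm_complex_of_C (complex.Re lam, complex.Im lam).
  by case: lam {scaleE} lam1 => a b /= -> [].
move=> j /ltP ltjN; apply: complex_of_C_inj.
have := congr1 (coefp j) scaleE; rewrite /= coefZ !coef_poly ltjN => ->.
by case: lam {lam1 scaleE}.
Qed.
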